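(* Let $\mathbf{C}$ be a small 2-category and $\mathbf{D}$ a 2-category with an enhanced factorization system $(\mathcal{E},\mathcal{M})$ such that: $(\mathcal{E},\mathcal{M})$ separates parallel pairs; every 1-cell in $\mathcal{E}$ is a 2-epimorphism and every 1-cell in $\mathcal{M}$ is a 2-monomorphism; and post-composition with 1-cells in $\mathcal{M}$ creates invertible 2-cells. Then $(\mathcal{E}^{\mathbf{C}},\mathcal{M}^{\mathbf{C}})$ is a rigid enhanced factorization system on $\mathbf{D}^{\mathbf{C}}$.
   Context: For a 2-category $\mathbf{A}$, an enhanced factorization system on $\mathbf{A}$ is a pair $(\mathcal{E},\mathcal{M})$ of classes of 1-cells of $\mathbf{A}$, each containing all isomorphisms, such that: (i) every 1-cell $\alpha$ factors (not necessarily uniquely) as $\alpha=\mu\circ\varepsilon$ with $\varepsilon\in\mathcal{E}$, $\mu\in\mathcal{M}$; (ii) given $\varepsilon\colon F\to F'$ in $\mathcal{E}$, $\mu\colon G\to G'$ in $\mathcal{M}$, 1-cells $\alpha\colon F\to G$, $\alpha'\colon F'\to G'$ and an invertible 2-cell $\Psi\colon \alpha'\varepsilon\Rightarrow\mu\alpha$, there is a unique pair $(\delta,\widetilde\Psi)$ with $\delta\colon F'\to G$ a 1-cell and $\widetilde\Psi\colon\alpha'\Rightarrow\mu\delta$ an invertible 2-cell such that $\delta\varepsilon=\alpha$ and the whiskering $\widetilde\Psi\varepsilon=\Psi$; moreover if $\Psi$ is an identity then $\mu\delta=\alpha'$ and $\widetilde\Psi$ is an identity; (iii) given $\varepsilon\colon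 F\to F'$ in $\mathcal{E}$, $\mu\colon G\to G'$ in $\mathcal{M}$, parallel 1-cells $\alpha_1,\alpha_2\colon F\to G$ and $\alpha_1',\alpha_2'\colon F'\to G'$ with $\alpha_i'\varepsilon=\mu\alpha_i$ ($i=1,2$), and 2-cells $\Phi\colon\alpha_1\Rightarrow\alpha_2$, $\Phi'\colon\alpha_1'\Rightarrow\alpha_2'$ with $\mu\Phi=\Phi'\varepsilon$, let $\delta_i\colon F'\to G$ be the unique 1-cells with $\delta_i\varepsilon=\alpha_i$ and $\mu\delta_i=\alpha_i'$ (from (ii) with identity 2-cell); then there is a unique 2-cell $\Delta\colon\delta_1\Rightarrow\delta_2$ with $\Delta\varepsilon=\Phi$ and $\mu\Delta=\Phi'$. It is rigid if moreover: for 1-cells $\mu\colon F\to G$ in $\mathcal{M}$ and $\alpha\colon G\to F$, if $\mu\alpha\cong\mathrm{id}_G$ (invertible 2-cell) then $\alpha\mu\cong\mathrm{id}_F$. $(\mathcal{E},\mathcal{M})$ separates parallel pairs if whenever $\alpha,\beta\colon F\to G$ are parallel 1-cells for which there exist $\varepsilon\in\mathcal{E}$ with target $F$ and $\alpha\varepsilon=\beta\varepsilon$, and $\mu\in\mathcal{M}$ with source $G$ and $\mu\alpha=\mu\beta$, then $\alpha=\beta$. A 1-cell $\varepsilon\colon F\to G$ is a 2-epimorphism if for all 1-cells $\beta,\beta'\colon G\to H$ and 2-cells $\Psi,\Psi'\colon\beta\Rightarrow\beta'$, $\Psi\varepsilon=\Psi'\varepsilon$ implies $\Psi=\Psi'$.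 A 1-cell $\mu\colon G\to H$ is a 2-monomorphism if for all 1-cells $\beta,\beta'\colon F\to G$ and 2-cells $\Psi,\Psi'\colon\beta\Rightarrow\beta'$, $\mu\Psi=\mu\Psi'$ implies $\Psi=\Psi'$. Post-composition with a 1-cell $\mu$ creates invertible 2-cells if for all parallel 1-cells $\alpha,\beta$ (composable with $\mu$) and every invertible 2-cell $\Psi\colon\mu\alpha\Rightarrow\mu\beta$ there is a unique invertible 2-cell $\widehat\Psi\colon\alpha\Rightarrow\beta$ with $\mu\widehat\Psi=\Psi$; post-composition with 1-cells in $\mathcal{M}$ creates invertible 2-cells if this holds for every $\mu\in\mathcal{M}$. $\mathbf{D}^{\mathbf{C}}$ is the 2-category of 2-functors $\mathbf{C}\to\mathbf{D}$, 2-natural transformations, and modifications. $\mathcal{E}^{\mathbf{C}}$ (resp. $\mathcal{M}^{\mathbf{C}}$) is the class of 2-natural transformations all of whose components lie in $\mathcal{E}$ (resp. $\mathcal{M}$). *)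

From Stdlib Require Import Eqdep Setoid.

Record PreTwoCat := {
  ob : Type;
  hom : ob -> ob -> Type;
  cell : forall (A B : ob), hom A B -> hom A B -> Type;
  id1 : forall A : ob, hom A A;
  comp1 : forall (A B C : ob), hom B C -> hom A B -> hom A C;  (* comp1 g f = g o f *)
  id2 : forall (A B : ob) (f : hom A B), cell A B f f;
  vcomp : forall (A B : ob) (f g h : hom A B),
      cell A B g h -> cell A B f g -> cell A B f h;
  hcomp : forall (A B C : ob) (f f' : hom A B) (g g' : hom B C),
      cell B C g g' -> cell A B f f' -> cell A C (comp1 A B C g f) (comp1 A B C g' f')
}.
Arguments hom {_} _ _.
Arguments cell {_ _ _} _ _.
Arguments id1 {_} _.
Arguments comp1 {_ _ _ _} _ _.
Arguments id2 {_ _ _} _.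
Arguments vcomp {_ _ _ _ _ _} _ _.
Arguments hcomp {_ _ _ _ _ _ _ _} _ _.

(* Heterogeneous equality of 2-cells with the same endpoints objects but
   possibly (propositionally equal) different source/target 1-cells:
   equality of the packed dependent pairs ((source,target), cell). *)
Definition Cells {P : PreTwoCat} (A B : ob P) :=
  { p : hom A B * hom A B & cell (fst p) (snd p) }.
Definition pk {P : PreTwoCat} {A B : ob P} {f g : hom A B} (x : cell f g) : Cells A B :=
  existT (fun p : hom A B * hom A B => cell (fst p) (snd p)) (f, g) x.
Definition Heq {P : PreTwoCat} {A B : ob P} {f g f' g' : hom A B}
  (x : cell f g) (y : cell f' g') : Prop := pk x = pk y.

Definition lwhisk {P : PreTwoCat} {A B C : ob P} (g : hom B C) {f f' : hom A B}
  (x : cell f f') : cell (comp1 g f) (comp1 g f') := hcomp (id2 g) x.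
Definition rwhisk {P : PreTwoCat} {A B C : ob P} {g g' : hom B C} (x : cell g g')
  (f : hom A B) : cell (comp1 g f) (comp1 g' f) := hcomp x (id2 f).

Record TwoCatAx (P : PreTwoCat) : Prop := {
  ax_comp1_assoc : forall (A B C D : ob P) (f : hom A B) (g : hom B C) (h : hom C D),
      comp1 h (comp1 g f) = comp1 (comp1 h g) f;
  ax_comp1_id_l : forall (A B : ob P) (f : hom A B), comp1 (id1 B) f = f;
  ax_comp1_id_r : forall (A B : ob P) (f : hom A B), comp1 f (id1 A) = f;
  ax_vcomp_assoc : forall (A B : ob P) (f g h k : hom A B)
      (x : cell h k) (y : cell g h) (z : cell f g),
      vcomp x (vcomp y z) = vcomp (vcomp x y) z;
  ax_vcomp_id_l : forall (A B : ob P) (f g : hom A B) (x : cell f g), vcomp (id2 g) x = x;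
  ax_vcomp_id_r : forall (A B : ob P) (f g : hom A B) (x : cell f g), vcomp x (id2 f) = x;
  ax_hcomp_assoc : forall (A B C D : ob P) (f f' : hom A B) (g g' : hom B C) (h h' : hom C D)
      (x : cell f f') (y : cell g g') (z : cell h h'),
      Heq (hcomp z (hcomp y x)) (hcomp (hcomp z y) x);
  ax_hcomp_id_l : forall (A B : ob P) (f f' : hom A B) (x : cell f f'),
      Heq (hcomp (id2 (id1 B)) x) x;
  ax_hcomp_id_r : forall (A B : ob P) (f f' : hom A B) (x : cell f f'),
      Heq (hcomp x (id2 (id1 A))) x;
  ax_hcomp_id2 : forall (A B C : ob P) (f : hom A B) (g : hom B C),
      hcomp (id2 g) (id2 f) = id2 (comp1 g f);
  ax_interchange : forall (A B C : ob P) (f f' f'' : hom A B) (g g' g'' : hom B C)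
      (x : cell f f') (x' : cell f' f'') (y : cell g g') (y' : cell g' g''),
      hcomp (vcomp y' y) (vcomp x' x) = vcomp (hcomp y' x') (hcomp y x)
}.

Record TwoCat := { pre :> PreTwoCat; tc_ax : TwoCatAx pre }.

Section HeqLemmas.
Context {P : PreTwoCat}.

Lemma Heq_refl {A B : ob P} {f g : hom A B} (x : cell f g) : Heq x x.
Proof. reflexivity. Qed.
Lemma Heq_sym {A B : ob P} {f g f' g' : hom A B} (x : cell f g) (y : cell f' g') :
  Heq x y -> Heq y x.
Proof. unfold Heq; intros; symmetry; assumption. Qed.
Lemma Heq_trans {A B : ob P} {f g f' g' f'' g'' : hom A B} (x : cell f g) (y : cell f' g')
  (z : cell f'' g'') : Heq x y -> Heq y z -> Heq x z.
Proof. unfold Heq; intros; etransitivity; eassumption. Qed.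
Lemma Heq_of_eq {A B : ob P} {f g : hom A B} (x y : cell f g) : x = y -> Heq x y.
Proof. intros ->; reflexivity. Qed.
Lemma Heq_eq {A B : ob P} {f g : hom A B} (x y : cell f g) : Heq x y -> x = y.
Proof. intro H; exact (inj_pair2 _ _ _ _ _ H). Qed.
Lemma Heq_idx {A B : ob P} {f g f' g' : hom A B} (x : cell f g) (y : cell f' g') :
  Heq x y -> f = f' /\ g = g'.
Proof.
  intro H; pose proof (f_equal (@projT1 _ _) H) as H1; simpl in H1.
  injection H1; auto.
Qed.
Lemma Heq_id2 {A B : ob P} (f g : hom A B) : f = g -> Heq (id2 f) (id2 g).
Proof. intros ->; reflexivity. Qed.
Lemma Heq_hcomp {A B C : ob P} {f1 f1' f2 f2' : hom A B} {g1 g1' g2 g2' : hom B C}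
  (y1 : cell g1 g1') (x1 : cell f1 f1') (y2 : cell g2 g2') (x2 : cell f2 f2') :
  Heq y1 y2 -> Heq x1 x2 -> Heq (hcomp y1 x1) (hcomp y2 x2).
Proof.
  intros e1 e2.
  pose (H := fun (s : Cells B C) (t : Cells A B) =>
    pk (hcomp (projT2 s) (projT2 t))).
  exact (f_equal2 H e1 e2).
Qed.
Lemma Heq_vcomp {A B : ob P} {f g h f' g' h' : hom A B}
  (x : cell g h) (y : cell f g) (x' : cell g' h') (y' : cell f' g') :
  Heq x x' -> Heq y y' -> Heq (vcomp x y) (vcomp x' y').
Proof.
  intros Hx Hy.
  destruct (Heq_idx _ _ Hy) as [<- <-].
  destruct (Heq_idx _ _ Hx) as [_ <-].
  apply Heq_eq in Hx; apply Heq_eq in Hy; subst; reflexivity.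
Qed.
End HeqLemmas.

Record TwoFunctor (C D : PreTwoCat) := {
  fob : ob C -> ob D;
  fhom : forall A B : ob C, hom A B -> hom (fob A) (fob B);
  fcell : forall (A B : ob C) (f g : hom A B), cell f g -> cell (fhom A B f) (fhom A B g);
  f_id1 : forall A : ob C, fhom A A (id1 A) = id1 (fob A);
  f_comp1 : forall (A B X : ob C) (f : hom A B) (g : hom B X),
      fhom A X (comp1 g f) = comp1 (fhom B X g) (fhom A B f);
  f_id2 : forall (A B : ob C) (f : hom A B), fcell A B f f (id2 f) = id2 (fhom A B f);
  f_vcomp : forall (A B : ob C) (f g h : hom A B) (x : cell g h) (y : cell f g),
      fcell A B f h (vcomp x y) = vcomp (fcell A B g h x) (fcell A B f g y);
  f_hcomp : forall (A B X : ob C) (f f' : hom A B) (g g' : hom B X)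
      (y : cell g g') (x : cell f f'),
      Heq (fcell A X _ _ (hcomp y x)) (hcomp (fcell B X g g' y) (fcell A B f f' x))
}.
Arguments fob {_ _} _ _.
Arguments fhom {_ _} _ {_ _} _.
Arguments fcell {_ _} _ {_ _ _ _} _.

Record TwoNat {C D : PreTwoCat} (F G : TwoFunctor C D) := {
  ncomp : forall A : ob C, hom (fob F A) (fob G A);
  nat1 : forall (A B : ob C) (f : hom A B),
      comp1 (fhom G f) (ncomp A) = comp1 (ncomp B) (fhom F f);
  nat2 : forall (A B : ob C) (f f' : hom A B) (x : cell f f'),
      Heq (rwhisk (fcell G x) (ncomp A)) (lwhisk (ncomp B) (fcell F x))
}.
Arguments ncomp {_ _ _ _} _ _.
Arguments nat1 {_ _ _ _} _ {_ _} _.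
Arguments nat2 {_ _ _ _} _ {_ _ _ _} _.

Record Modif {C D : PreTwoCat} {F G : TwoFunctor C D} (s t : TwoNat F G) := {
  mcomp : forall A : ob C, cell (ncomp s A) (ncomp t A);
  mnat : forall (A B : ob C) (f : hom A B),
      Heq (lwhisk (fhom G f) (mcomp A)) (rwhisk (mcomp B) (fhom F f))
}.
Arguments mcomp {_ _ _ _ _ _} _ _.
Arguments mnat {_ _ _ _ _ _} _ {_ _} _.

Section FunCat.
Context (C : PreTwoCat) (D : TwoCat).

Let AX := tc_ax D.

Definition idnat (F : TwoFunctor C D) : TwoNat F F.
Proof.
  refine {| ncomp := fun A => id1 (fob F A) |}.
  - intros A B f. rewrite (ax_comp1_id_r _ AX), (ax_comp1_id_l _ AX). reflexivity.
  - intros A B f f' x. unfold rwhisk, lwhisk.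
    eapply Heq_trans. apply (ax_hcomp_id_r _ AX).
    apply Heq_sym. apply (ax_hcomp_id_l _ AX).
Defined.

Definition compnat {F G H : TwoFunctor C D} (s : TwoNat F G) (t : TwoNat G H) : TwoNat F H.
Proof.
  refine {| ncomp := fun A => comp1 (ncomp t A) (ncomp s A) |}.
  - intros A B f.
    rewrite (ax_comp1_assoc _ AX), (nat1 t f), <- (ax_comp1_assoc _ AX), (nat1 s f),
      (ax_comp1_assoc _ AX). reflexivity.
  - intros A B f f' x. unfold rwhisk, lwhisk.
    rewrite <- !(ax_hcomp_id2 _ AX).
    eapply Heq_trans. apply (ax_hcomp_assoc _ AX).
    eapply Heq_trans. eapply Heq_hcomp. apply (nat2 t x). eapply Heq_refl.
    eapply Heq_trans. apply Heq_sym, (ax_hcomp_assoc _ AX).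
    eapply Heq_trans. eapply Heq_hcomp. eapply Heq_refl. apply (nat2 s x).
    apply (ax_hcomp_assoc _ AX).
Defined.

Definition idmod {F G : TwoFunctor C D} (s : TwoNat F G) : Modif s s.
Proof.
  refine {| mcomp := fun A => id2 (ncomp s A) |}.
  intros A B f. unfold rwhisk, lwhisk. rewrite !(ax_hcomp_id2 _ AX).
  apply Heq_id2. apply nat1.
Defined.

Definition vcompmod {F G : TwoFunctor C D} {s t r : TwoNat F G}
  (y : Modif t r) (x : Modif s t) : Modif s r.
Proof.
  refine {| mcomp := fun A => vcomp (mcomp y A) (mcomp x A) |}.
  intros A B f. unfold rwhisk, lwhisk.
  rewrite <- (ax_vcomp_id_l _ AX _ _ _ _ (id2 (fhom G f))) at 1.
  rewrite <- (ax_vcomp_id_l _ AX _ _ _ _ (id2 (fhom F f))).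
  rewrite !(ax_interchange _ AX).
  apply Heq_vcomp; apply mnat.
Defined.

Definition hcompmod {F G H : TwoFunctor C D} {s s' : TwoNat F G} {t t' : TwoNat G H}
  (y : Modif t t') (x : Modif s s') : Modif (compnat s t) (compnat s' t').
Proof.
  refine (@Build_Modif C D F H (compnat s t) (compnat s' t')
    (fun A => hcomp (mcomp y A) (mcomp x A)) _).
  intros A B f. unfold rwhisk, lwhisk. simpl.
  eapply Heq_trans. apply (ax_hcomp_assoc _ AX).
  eapply Heq_trans. eapply Heq_hcomp. apply (mnat y f). eapply Heq_refl.
  eapply Heq_trans. apply Heq_sym, (ax_hcomp_assoc _ AX).
  eapply Heq_trans. eapply Heq_hcomp. eapply Heq_refl. apply (mnat x f).
  apply (ax_hcomp_assoc _ AX).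
Defined.

Definition FunCat : PreTwoCat := {|
  ob := TwoFunctor C D;
  hom := fun F G => TwoNat F G;
  cell := fun F G s t => Modif s t;
  id1 := idnat;
  comp1 := fun F G H t s => compnat s t;
  id2 := fun F G s => idmod s;
  vcomp := fun F G s t r y x => vcompmod y x;
  hcomp := fun F G H s s' t t' y x => hcompmod y x
|}.
End FunCat.

Definition Class (P : PreTwoCat) := forall A B : ob P, hom A B -> Prop.

Section EFS.
Context {P : PreTwoCat}.

Definition iso1 {A B : ob P} (f : hom A B) : Prop :=
  exists g : hom B A, comp1 g f = id1 A /\ comp1 f g = id1 B.

Definition inv2 {A B : ob P} {f g : hom A B} (x : cell f g) : Prop :=
  exists y : cell g f, vcomp y x = id2 f /\ vcomp x y = id2 g.

Definition contains_isos (K : Class P) : Prop :=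
  forall (A B : ob P) (f : hom A B), iso1 f -> K A B f.

Definition efs_factor (E M : Class P) : Prop :=
  forall (A B : ob P) (a : hom A B),
    exists (X : ob P) (e : hom A X) (m : hom X B), E _ _ e /\ M _ _ m /\ a = comp1 m e.

Definition efs_lift (E M : Class P) : Prop :=
  forall (F F' G G' : ob P) (eps : hom F F') (mu : hom G G') (a : hom F G) (a' : hom F' G')
    (Psi : cell (comp1 a' eps) (comp1 mu a)),
    E _ _ eps -> M _ _ mu -> inv2 Psi ->
    exists (d : hom F' G) (Psit : cell a' (comp1 mu d)),
      (comp1 d eps = a /\ inv2 Psit /\ Heq (rwhisk Psit eps) Psi) /\
      (forall (d2 : hom F' G) (Psi2 : cell a' (comp1 mu d2)),
          comp1 d2 eps = a -> inv2 Psi2 -> Heq (rwhisk Psi2 eps) Psi ->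
          d2 = d /\ Heq Psi2 Psit) /\
      (Heq Psi (id2 (comp1 a' eps)) -> comp1 mu d = a' /\ Heq Psit (id2 a')).

Definition efs_2lift (E M : Class P) : Prop :=
  forall (F F' G G' : ob P) (eps : hom F F') (mu : hom G G')
    (a1 a2 : hom F G) (a1' a2' : hom F' G'),
    E _ _ eps -> M _ _ mu ->
    comp1 a1' eps = comp1 mu a1 -> comp1 a2' eps = comp1 mu a2 ->
    forall (Phi : cell a1 a2) (Phi' : cell a1' a2'),
      Heq (lwhisk mu Phi) (rwhisk Phi' eps) ->
      forall d1 d2 : hom F' G,
        comp1 d1 eps = a1 -> comp1 mu d1 = a1' ->
        comp1 d2 eps = a2 -> comp1 mu d2 = a2' ->
        exists Delta : cell d1 d2,
          (Heq (rwhisk Delta eps) Phi /\ Heq (lwhisk mu Delta) Phi') /\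
          (forall Delta' : cell d1 d2,
              Heq (rwhisk Delta' eps) Phi -> Heq (lwhisk mu Delta') Phi' -> Delta' = Delta).

Definition enhanced_fact_system (E M : Class P) : Prop :=
  contains_isos E /\ contains_isos M /\ efs_factor E M /\ efs_lift E M /\ efs_2lift E M.

Definition rigid_cond (M : Class P) : Prop :=
  forall (F G : ob P) (mu : hom F G) (a : hom G F),
    M _ _ mu ->
    (exists Psi : cell (comp1 mu a) (id1 G), inv2 Psi) ->
    exists Psi' : cell (comp1 a mu) (id1 F), inv2 Psi'.

Definition rigid_efs (E M : Class P) : Prop :=
  enhanced_fact_system E M /\ rigid_cond M.

Definition separates_parallel_pairs (E M : Class P) : Prop :=
  forall (F G : ob P) (a b : hom F G),
    (exists (F0 : ob P) (e : hom F0 F), E _ _ e /\ comp1 a e = comp1 b e) ->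
    (exists (G0 : ob P) (m : hom G G0), M _ _ m /\ comp1 m a = comp1 m b) ->
    a = b.

Definition two_epi {F G : ob P} (e : hom F G) : Prop :=
  forall (H : ob P) (b b' : hom G H) (x y : cell b b'), rwhisk x e = rwhisk y e -> x = y.

Definition two_mono {G H : ob P} (m : hom G H) : Prop :=
  forall (F : ob P) (b b' : hom F G) (x y : cell b b'), lwhisk m x = lwhisk m y -> x = y.

Definition postcomp_creates_inv2 {G G' : ob P} (mu : hom G G') : Prop :=
  forall (X : ob P) (a b : hom X G) (Psi : cell (comp1 mu a) (comp1 mu b)),
    inv2 Psi ->
    exists hat : cell a b,
      (inv2 hat /\ lwhisk mu hat = Psi) /\
      (forall hat' : cell a b, inv2 hat' -> lwhisk mu hat' = Psi -> hat' = hat).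

End EFS.

Definition pointwise {C : PreTwoCat} {D : TwoCat} (K : Class D) : Class (FunCat C D) :=
  fun F G s => forall A : ob C, K _ _ (ncomp s A).

From Stdlib Require Import ProofIrrelevance FunctionalExtensionality IndefiniteDescription.

(* Everything is built componentwise. A 2-natural transformation is factored by factoring
   each component; the middle 2-functor sends a 1-cell (resp. 2-cell) of C to the diagonal
   that (ii) (resp. (iii)) provides for the corresponding naturality square, and these
   choices are functorial because E/M separates parallel pairs and E-cells are
   2-epimorphisms. Componentwise solutions of lifting problems are natural for the same
   reasons, using the uniqueness in (ii) and (iii). Rigidity holds pointwise because
   post-composition with an M-cell creates invertible 2-cells, and the created 2-cells form
   a modification because M-cells are 2-monomorphisms. *)

Lemma dependent_choice {I : Type} {X : I -> Type} (R : forall i, X i -> Prop) :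
  (forall i, exists x, R i x) -> exists f : forall i, X i, forall i, R i (f i).
Proof.
  intro H.
  exists (fun i => proj1_sig (constructive_indefinite_description _ (H i))).
  intro i. exact (proj2_sig (constructive_indefinite_description _ (H i))).
Qed.

Section TwoCatFacts.
Context {D : TwoCat}.
Let AX := tc_ax D.

Lemma comp1_assoc {A B X Y : ob D} (f : hom A B) (g : hom B X) (h : hom X Y) :
  comp1 h (comp1 g f) = comp1 (comp1 h g) f.
Proof. apply (ax_comp1_assoc _ AX). Qed.
Lemma comp1_id_l {A B : ob D} (f : hom A B) : comp1 (id1 B) f = f.
Proof. apply (ax_comp1_id_l _ AX). Qed.
Lemma comp1_id_r {A B : ob D} (f : hom A B) : comp1 f (id1 A) = f.
Proof. apply (ax_comp1_id_r _ AX). Qed.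

Definition cell_cast {A B : ob D} {f g f' g' : hom A B} (e1 : f = f') (e2 : g = g')
  (x : cell f g) : cell f' g' :=
  eq_rect _ (fun h => cell h g') (eq_rect _ (fun k => cell f k) x _ e2) _ e1.

Lemma cell_cast_Heq {A B : ob D} {f g f' g' : hom A B} (e1 : f = f') (e2 : g = g')
  (x : cell f g) : Heq (cell_cast e1 e2 x) x.
Proof. destruct e1, e2; reflexivity. Qed.

Lemma inv2_cell_cast {A B : ob D} {f g f' g' : hom A B} (e1 : f = f') (e2 : g = g')
  (x : cell f g) : inv2 x -> inv2 (cell_cast e1 e2 x).
Proof. destruct e1, e2; auto. Qed.

Lemma Heq_rwhisk {A B X : ob D} {g g' h h' : hom B X} (x : cell g g') (y : cell h h')
  (f f2 : hom A B) : Heq x y -> f = f2 -> Heq (rwhisk x f) (rwhisk y f2).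
Proof. intros H <-. apply Heq_hcomp; auto. reflexivity. Qed.

Lemma Heq_lwhisk {A B X : ob D} {g g' h h' : hom A B} (x : cell g g') (y : cell h h')
  (f f2 : hom B X) : Heq x y -> f = f2 -> Heq (lwhisk f x) (lwhisk f2 y).
Proof. intros H <-. apply Heq_hcomp; auto. reflexivity. Qed.

Lemma rwhisk_rwhisk {A B X Y : ob D} (f : hom A B) (g : hom B X) {h h' : hom X Y}
  (x : cell h h') : Heq (rwhisk (rwhisk x g) f) (rwhisk x (comp1 g f)).
Proof.
  unfold rwhisk. eapply Heq_trans. apply Heq_sym, (ax_hcomp_assoc _ AX).
  rewrite (ax_hcomp_id2 _ AX). reflexivity.
Qed.

Lemma lwhisk_lwhisk {A B X Y : ob D} (g : hom X Y) (h : hom B X) {f f' : hom A B}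
  (x : cell f f') : Heq (lwhisk g (lwhisk h x)) (lwhisk (comp1 g h) x).
Proof.
  unfold lwhisk. eapply Heq_trans. apply (ax_hcomp_assoc _ AX).
  rewrite (ax_hcomp_id2 _ AX). reflexivity.
Qed.

Lemma rwhisk_lwhisk {A B X Y : ob D} (f : hom A B) (g : hom X Y) {h h' : hom B X}
  (x : cell h h') : Heq (rwhisk (lwhisk g x) f) (lwhisk g (rwhisk x f)).
Proof. apply Heq_sym, (ax_hcomp_assoc _ AX). Qed.

Lemma rwhisk_vcomp {A B X : ob D} (f : hom A B) {g h k : hom B X} (y : cell h k)
  (x : cell g h) : rwhisk (vcomp y x) f = vcomp (rwhisk y f) (rwhisk x f).
Proof. unfold rwhisk. rewrite <- (ax_interchange _ AX), (ax_vcomp_id_l _ AX). reflexivity. Qed.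

Lemma lwhisk_vcomp {A B X : ob D} (f : hom B X) {g h k : hom A B} (y : cell h k)
  (x : cell g h) : lwhisk f (vcomp y x) = vcomp (lwhisk f y) (lwhisk f x).
Proof. unfold lwhisk. rewrite <- (ax_interchange _ AX), (ax_vcomp_id_l _ AX). reflexivity. Qed.

Lemma rwhisk_id2 {A B X : ob D} (f : hom A B) (g : hom B X) :
  rwhisk (id2 g) f = id2 (comp1 g f).
Proof. apply (ax_hcomp_id2 _ AX). Qed.

Lemma lwhisk_id2 {A B X : ob D} (f : hom A B) (g : hom B X) :
  lwhisk g (id2 f) = id2 (comp1 g f).
Proof. apply (ax_hcomp_id2 _ AX). Qed.

Lemma inv2_id2 {A B : ob D} (f : hom A B) : inv2 (id2 f).
Proof. exists (id2 f). rewrite (ax_vcomp_id_l _ AX). auto. Qed.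

Lemma inv2_rwhisk {A B X : ob D} (f : hom A B) {g h : hom B X} (x : cell g h) :
  inv2 x -> inv2 (rwhisk x f).
Proof.
  intros [y [H1 H2]]. exists (rwhisk y f).
  rewrite <- !rwhisk_vcomp, H1, H2, !rwhisk_id2. auto.
Qed.

Lemma inv2_lwhisk {A B X : ob D} (f : hom B X) {g h : hom A B} (x : cell g h) :
  inv2 x -> inv2 (lwhisk f x).
Proof.
  intros [y [H1 H2]]. exists (lwhisk f y).
  rewrite <- !lwhisk_vcomp, H1, H2, !lwhisk_id2. auto.
Qed.

Lemma Heq_inverse {A B : ob D} {f g f' g' : hom A B} (x : cell f g) (x' : cell g f)
  (y : cell f' g') (y' : cell g' f') :
  Heq x y -> vcomp x' x = id2 f -> vcomp x x' = id2 g ->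
  vcomp y' y = id2 f' -> vcomp y y' = id2 g' -> Heq x' y'.
Proof.
  intro H. destruct (Heq_idx _ _ H) as [<- <-]. apply Heq_eq in H. subst y.
  intros H1 _ _ H4. apply Heq_of_eq.
  rewrite <- (ax_vcomp_id_r _ AX _ _ _ _ x'), <- H4, (ax_vcomp_assoc _ AX), H1,
    (ax_vcomp_id_l _ AX). reflexivity.
Qed.

Lemma two_epi_Heq {F G H : ob D} (e : hom F G) : two_epi e ->
  forall (b1 b1' b2 b2' : hom G H) (x : cell b1 b1') (y : cell b2 b2'),
  b1 = b2 -> b1' = b2' -> Heq (rwhisk x e) (rwhisk y e) -> Heq x y.
Proof. intros He b1 b1' b2 b2' x y <- <- Hxy. apply Heq_of_eq, He, Heq_eq, Hxy. Qed.

Lemma two_mono_Heq {F G H : ob D} (m : hom G H) : two_mono m ->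
  forall (b1 b1' b2 b2' : hom F G) (x : cell b1 b1') (y : cell b2 b2'),
  b1 = b2 -> b1' = b2' -> Heq (lwhisk m x) (lwhisk m y) -> Heq x y.
Proof. intros Hm b1 b1' b2 b2' x y <- <- Hxy. apply Heq_of_eq, Hm, Heq_eq, Hxy. Qed.

Lemma postcomp_creates_inv2_Heq {X G G' : ob D} (mu : hom G G') (a b : hom X G)
  {f g : hom X G'} (Psi : cell f g) :
  postcomp_creates_inv2 mu -> f = comp1 mu a -> g = comp1 mu b -> inv2 Psi ->
  exists hat : cell a b, inv2 hat /\ Heq (lwhisk mu hat) Psi.
Proof.
  intros Hcr -> -> HPsi. destruct (Hcr _ _ _ Psi HPsi) as [hat [[Hinv <-] _]].
  exists hat. split; [exact Hinv | reflexivity].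
Qed.

Section Lifting.
Context {E M : Class D} (Hl : efs_lift E M).

Lemma efs_lift_strict {F F' G G' : ob D} (eps : hom F F') (mu : hom G G')
  (a : hom F G) (a' : hom F' G') :
  E _ _ eps -> M _ _ mu -> comp1 a' eps = comp1 mu a ->
  exists d : hom F' G, comp1 d eps = a /\ comp1 mu d = a'.
Proof.
  intros HE HM Hsq.
  destruct (Hl _ _ _ _ eps mu a a' (cell_cast eq_refl Hsq (id2 _)) HE HM)
    as [d [Pd [[Hd _] [_ Hstrict]]]].
  { apply inv2_cell_cast, inv2_id2. }
  exists d. split; [exact Hd|]. apply Hstrict, cell_cast_Heq.
Qed.

Lemma efs_lift_diag_unique {F F' G G' : ob D} (eps : hom F F') (mu : hom G G')
  (a' : hom F' G') (d1 d2 : hom F' G) (P1 : cell a' (comp1 mu d1)) (P2 : cell a' (comp1 mu d2)) :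
  E _ _ eps -> M _ _ mu -> comp1 d1 eps = comp1 d2 eps -> inv2 P1 -> inv2 P2 ->
  Heq (rwhisk P1 eps) (rwhisk P2 eps) -> d1 = d2.
Proof.
  intros HE HM Hd HP1 HP2 HP.
  assert (e : comp1 (comp1 mu d1) eps = comp1 mu (comp1 d1 eps))
    by (symmetry; apply comp1_assoc).
  destruct (Hl _ _ _ _ eps mu _ a' (cell_cast eq_refl e (rwhisk P1 eps)) HE HM)
    as [d [Pd [_ [Huniq _]]]].
  { apply inv2_cell_cast, inv2_rwhisk, HP1. }
  destruct (Huniq d1 P1 eq_refl HP1) as [-> _]; [apply Heq_sym, cell_cast_Heq|].
  destruct (Huniq d2 P2 (eq_sym Hd) HP2) as [-> _]; [|reflexivity].
  eapply Heq_trans; [apply Heq_sym, HP|]. apply Heq_sym, cell_cast_Heq.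
Qed.
End Lifting.
End TwoCatFacts.

Section FunCatFacts.
Context {C : PreTwoCat} {D : TwoCat}.
Notation FC := (FunCat C D).

Lemma TwoNat_ext {F G : TwoFunctor C D} (s t : TwoNat F G) :
  (forall A, ncomp s A = ncomp t A) -> s = t.
Proof.
  intro H. destruct s as [s1 s2 s3], t as [t1 t2 t3]. simpl in H.
  assert (s1 = t1) by (apply functional_extensionality_dep; exact H). subst t1.
  f_equal; apply proof_irrelevance.
Qed.

Lemma ncomp_eq {F G : TwoFunctor C D} (s t : TwoNat F G) :
  s = t -> forall A, ncomp s A = ncomp t A.
Proof. intros ->; reflexivity. Qed.

Lemma Modif_ext {F G : TwoFunctor C D} {s t : TwoNat F G} (x y : Modif s t) :
  (forall A, mcomp x A = mcomp y A) -> x = y.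
Proof.
  intro H. destruct x as [x1 x2], y as [y1 y2]. simpl in H.
  assert (x1 = y1) by (apply functional_extensionality_dep; exact H). subst y1.
  f_equal; apply proof_irrelevance.
Qed.

Lemma Heq_mcomp {F G : TwoFunctor C D} {s t s' t' : TwoNat F G}
  (x : Modif s t) (y : Modif s' t') :
  @Heq FC F G s t s' t' x y -> forall A, Heq (mcomp x A) (mcomp y A).
Proof.
  intro H. destruct (Heq_idx _ _ H) as [e1 e2]. simpl in e1, e2. subst s' t'.
  apply Heq_eq in H. subst y. reflexivity.
Qed.

Lemma Heq_Modif {F G : TwoFunctor C D} {s t s' t' : TwoNat F G}
  (x : Modif s t) (y : Modif s' t') :
  (forall A, ncomp s A = ncomp s' A) -> (forall A, ncomp t A = ncomp t' A) ->
  (forall A, Heq (mcomp x A) (mcomp y A)) -> @Heq FC F G s t s' t' x y.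
Proof.
  intros H1 H2 H3. apply TwoNat_ext in H1, H2. subst s' t'.
  apply (@Heq_of_eq FC). apply Modif_ext. intro A. apply Heq_eq, H3.
Qed.

Lemma inv2_mcomp {F G : TwoFunctor C D} {s t : TwoNat F G} (x : Modif s t) :
  @inv2 FC F G s t x -> forall A, inv2 (mcomp x A).
Proof.
  intros [y [H1 H2]] A. exists (mcomp y A).
  apply (f_equal (fun m => mcomp m A)) in H1, H2. auto.
Qed.

(* The componentwise inverses are automatically natural, by uniqueness of inverses. *)
Lemma inv2_Modif {F G : TwoFunctor C D} {s t : TwoNat F G} (x : Modif s t) :
  (forall A, inv2 (mcomp x A)) -> @inv2 FC F G s t x.
Proof.
  intro H. destruct (dependent_choice _ H) as [y Hy].
  assert (Hnat : forall (A B : ob C) (f : hom A B),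
    Heq (lwhisk (fhom G f) (y A)) (rwhisk (y B) (fhom F f))).
  { intros A B f. destruct (Hy A) as [HA1 HA2], (Hy B) as [HB1 HB2].
    apply (Heq_inverse _ _ _ _ (mnat x f)).
    - rewrite <- lwhisk_vcomp, HA1, lwhisk_id2. reflexivity.
    - rewrite <- lwhisk_vcomp, HA2, lwhisk_id2. reflexivity.
    - rewrite <- rwhisk_vcomp, HB1, rwhisk_id2. reflexivity.
    - rewrite <- rwhisk_vcomp, HB2, rwhisk_id2. reflexivity. }
  exists (Build_Modif C D F G t s y Hnat).
  split; apply Modif_ext; intro A; simpl; apply Hy.
Qed.

Lemma contains_isos_pointwise (K : Class D) :
  contains_isos K -> contains_isos (P := FC) (pointwise K).
Proof.
  intros HK F G s [t [H1 H2]] A. apply HK. exists (ncomp t A).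
  apply (f_equal (fun n => ncomp n A)) in H1, H2. auto.
Qed.
End FunCatFacts.

Section Naturality.
Context {C : PreTwoCat} {D : TwoCat}.

Lemma mnat_of_rwhisk_two_epi {F F' G : TwoFunctor C D} (eps : TwoNat F F')
  (s1 s2 : TwoNat F' G) {b1 b2 : TwoNat F G} (Phi : Modif b1 b2)
  (x : forall A, cell (ncomp s1 A) (ncomp s2 A)) :
  (forall A, two_epi (ncomp eps A)) ->
  (forall A, Heq (rwhisk (x A) (ncomp eps A)) (mcomp Phi A)) ->
  forall (A B : ob C) (f : hom A B),
    Heq (lwhisk (fhom G f) (x A)) (rwhisk (x B) (fhom F' f)).
Proof.
  intros Hepi Hx A B f. apply (two_epi_Heq _ (Hepi A)); [apply nat1 | apply nat1 |].
  eapply Heq_trans; [apply rwhisk_lwhisk|].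
  eapply Heq_trans; [eapply Heq_lwhisk; [apply Hx | reflexivity]|].
  eapply Heq_trans; [apply (mnat Phi f)|].
  eapply Heq_trans; [eapply Heq_rwhisk; [apply Heq_sym, Hx | reflexivity]|].
  eapply Heq_trans; [apply rwhisk_rwhisk|].
  eapply Heq_trans; [eapply Heq_rwhisk; [apply Heq_refl | symmetry; apply (nat1 eps f)]|].
  apply Heq_sym, rwhisk_rwhisk.
Qed.

Lemma mnat_of_lwhisk_two_mono {F G G' : TwoFunctor C D} (mu : TwoNat G G')
  (s1 s2 : TwoNat F G) {b1 b2 : TwoNat F G'} (Phi : Modif b1 b2)
  (x : forall A, cell (ncomp s1 A) (ncomp s2 A)) :
  (forall A, two_mono (ncomp mu A)) ->
  (forall A, Heq (lwhisk (ncomp mu A) (x A)) (mcomp Phi A)) ->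
  forall (A B : ob C) (f : hom A B),
    Heq (lwhisk (fhom G f) (x A)) (rwhisk (x B) (fhom F f)).
Proof.
  intros Hmono Hx A B f. apply (two_mono_Heq _ (Hmono B)); [apply nat1 | apply nat1 |].
  eapply Heq_trans; [apply lwhisk_lwhisk|].
  eapply Heq_trans; [eapply Heq_lwhisk; [apply Heq_refl | symmetry; apply (nat1 mu f)]|].
  eapply Heq_trans; [apply Heq_sym, lwhisk_lwhisk|].
  eapply Heq_trans; [eapply Heq_lwhisk; [apply Hx | reflexivity]|].
  eapply Heq_trans; [apply (mnat Phi f)|].
  eapply Heq_trans; [eapply Heq_rwhisk; [apply Heq_sym, Hx | reflexivity]|].
  apply rwhisk_lwhisk.
Qed.

Lemma nat2_of_two_epi {F F' G : TwoFunctor C D} (eps : TwoNat F F') (b : TwoNat F G)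
  (d : forall A, hom (fob F' A) (fob G A)) :
  (forall A, two_epi (ncomp eps A)) ->
  (forall A, comp1 (d A) (ncomp eps A) = ncomp b A) ->
  (forall (A B : ob C) (f : hom A B), comp1 (fhom G f) (d A) = comp1 (d B) (fhom F' f)) ->
  forall (A B : ob C) (f f' : hom A B) (x : cell f f'),
    Heq (rwhisk (fcell G x) (d A)) (lwhisk (d B) (fcell F' x)).
Proof.
  intros Hepi Hd Hnat A B f f' x. apply (two_epi_Heq _ (Hepi A)); [apply Hnat | apply Hnat |].
  eapply Heq_trans; [apply rwhisk_rwhisk|].
  eapply Heq_trans; [eapply Heq_rwhisk; [apply Heq_refl | apply Hd]|].
  eapply Heq_trans; [apply (nat2 b x)|].
  eapply Heq_trans; [eapply Heq_lwhisk; [apply Heq_refl | symmetry; apply Hd]|].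
  eapply Heq_trans; [apply Heq_sym, lwhisk_lwhisk|].
  eapply Heq_trans; [eapply Heq_lwhisk; [apply Heq_sym, (nat2 eps x) | reflexivity]|].
  apply Heq_sym, rwhisk_lwhisk.
Qed.
End Naturality.

(* If [mu a ~= 1], then [mu a mu ~= mu = mu 1], and post-composition with [mu] creates [a mu ~= 1]. *)
Lemma rigid_cond_pointwise {C : PreTwoCat} {D : TwoCat} {M : Class D} :
  (forall (A B : ob D) (m : hom A B), M A B m -> two_mono m) ->
  (forall (A B : ob D) (m : hom A B), M A B m -> postcomp_creates_inv2 m) ->
  rigid_cond (P := FunCat C D) (pointwise M).
Proof.
  intros Hmono Hcr F G mu a HM [Psi HPsi].
  assert (Hhat : forall A, exists hat : cell (comp1 (ncomp a A) (ncomp mu A)) (id1 (fob F A)),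
    inv2 hat /\ Heq (lwhisk (ncomp mu A) hat) (rwhisk (mcomp Psi A) (ncomp mu A))).
  { intro A. apply postcomp_creates_inv2_Heq.
    - apply Hcr, HM.
    - symmetry; apply comp1_assoc.
    - simpl. rewrite comp1_id_l, comp1_id_r. reflexivity.
    - apply inv2_rwhisk, (inv2_mcomp Psi HPsi). }
  destruct (dependent_choice _ Hhat) as [hat Hh].
  exists (Build_Modif C D F F (compnat C D mu a) (idnat C D F) hat
    (mnat_of_lwhisk_two_mono mu (compnat C D mu a) (idnat C D F) (rwhisk (P := FunCat C D) Psi mu) hat
       (fun A => Hmono _ _ _ (HM A)) (fun A => proj2 (Hh A)))).
  apply inv2_Modif. intro A. apply Hh.
Qed.

Lemma efs_2lift_pointwise {C : PreTwoCat} {D : TwoCat} {E M : Class D} :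
  efs_2lift E M -> (forall (A B : ob D) (e : hom A B), E A B e -> two_epi e) ->
  efs_2lift (P := FunCat C D) (pointwise E) (pointwise M).
Proof.
  intros H2 Hepi F F' G G' eps mu a1 a2 a1' a2' HE HM Hs1 Hs2 Phi Phi' HPhi
    d1 d2 Hd1e Hd1m Hd2e Hd2m.
  assert (HDl : forall A, exists Dl : cell (ncomp d1 A) (ncomp d2 A),
    (Heq (rwhisk Dl (ncomp eps A)) (mcomp Phi A) /\
     Heq (lwhisk (ncomp mu A) Dl) (mcomp Phi' A)) /\
    (forall Dl' : cell (ncomp d1 A) (ncomp d2 A),
        Heq (rwhisk Dl' (ncomp eps A)) (mcomp Phi A) ->
        Heq (lwhisk (ncomp mu A) Dl') (mcomp Phi' A) -> Dl' = Dl)).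
  { intro A. exact (H2 _ _ _ _ _ _ _ _ _ _ (HE A) (HM A) (ncomp_eq _ _ Hs1 A)
      (ncomp_eq _ _ Hs2 A) _ _ (Heq_mcomp _ _ HPhi A) _ _
      (ncomp_eq _ _ Hd1e A) (ncomp_eq _ _ Hd1m A)
      (ncomp_eq _ _ Hd2e A) (ncomp_eq _ _ Hd2m A)). }
  destruct (dependent_choice _ HDl) as [Dl HD].
  exists (Build_Modif C D F' G d1 d2 Dl
    (mnat_of_rwhisk_two_epi eps d1 d2 Phi Dl
       (fun A => Hepi _ _ _ (HE A)) (fun A => proj1 (proj1 (HD A))))).
  split; [split|].
  - apply Heq_Modif; [exact (ncomp_eq _ _ Hd1e) | exact (ncomp_eq _ _ Hd2e) | apply HD].
  - apply Heq_Modif; [exact (ncomp_eq _ _ Hd1m) | exact (ncomp_eq _ _ Hd2m) | apply HD].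
  - intros Dl' H1 H1'. apply Modif_ext. intro A. apply HD.
    + exact (Heq_mcomp _ _ H1 A).
    + exact (Heq_mcomp _ _ H1' A).
Qed.

Section LiftPointwise.
Context {C : PreTwoCat} {D : TwoCat} {E M : Class D} (Hl : efs_lift E M)
  (Hepi : forall (A B : ob D) (e : hom A B), E A B e -> two_epi e).
Context {F F' G G' : TwoFunctor C D} (eps : TwoNat F F') (mu : TwoNat G G')
  (a : TwoNat F G) (a' : TwoNat F' G') (Psi : Modif (compnat C D eps a') (compnat C D a mu))
  (HE : forall A, E _ _ (ncomp eps A)) (HM : forall A, M _ _ (ncomp mu A)).
Context (d : forall A, hom (fob F' A) (fob G A))
  (Pt : forall A, cell (ncomp a' A) (comp1 (ncomp mu A) (d A)))
  (d_eps : forall A, comp1 (d A) (ncomp eps A) = ncomp a A)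
  (Pt_inv : forall A, inv2 (Pt A))
  (Pt_eps : forall A, Heq (rwhisk (Pt A) (ncomp eps A)) (mcomp Psi A)).

(* Both [d B o F' f] and [G f o d A] are diagonals of the lifting problem [Psi B] whiskered by [F f]. *)
Lemma lift_nat1 (A B : ob C) (f : hom A B) :
  comp1 (fhom G f) (d A) = comp1 (d B) (fhom F' f).
Proof.
  assert (HB : Heq (rwhisk (rwhisk (Pt B) (fhom F' f)) (ncomp eps A))
                   (rwhisk (mcomp Psi B) (fhom F f))).
  { eapply Heq_trans; [apply rwhisk_rwhisk|].
    eapply Heq_trans; [eapply Heq_rwhisk; [apply Heq_refl | apply (nat1 eps f)]|].
    eapply Heq_trans; [apply Heq_sym, rwhisk_rwhisk|].
    eapply Heq_rwhisk; [apply Pt_eps | reflexivity]. }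
  assert (HA : Heq (rwhisk (lwhisk (fhom G' f) (Pt A)) (ncomp eps A))
                   (rwhisk (mcomp Psi B) (fhom F f))).
  { eapply Heq_trans; [apply rwhisk_lwhisk|].
    eapply Heq_trans; [eapply Heq_lwhisk; [apply Pt_eps | reflexivity]|].
    apply (mnat Psi f). }
  assert (eB : comp1 (comp1 (ncomp mu B) (d B)) (fhom F' f)
             = comp1 (ncomp mu B) (comp1 (d B) (fhom F' f))) by (symmetry; apply comp1_assoc).
  assert (eA : comp1 (fhom G' f) (comp1 (ncomp mu A) (d A))
             = comp1 (ncomp mu B) (comp1 (fhom G f) (d A)))
    by (rewrite comp1_assoc, (nat1 mu f), <- comp1_assoc; reflexivity).
  symmetry. apply (efs_lift_diag_unique Hl (ncomp eps A) (ncomp mu B) _ _ _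
    (cell_cast eq_refl eB (rwhisk (Pt B) (fhom F' f)))
    (cell_cast (nat1 a' f) eA (lwhisk (fhom G' f) (Pt A))) (HE A) (HM B)).
  - rewrite <- !comp1_assoc, (nat1 eps f), comp1_assoc, d_eps, d_eps. symmetry; apply nat1.
  - apply inv2_cell_cast, inv2_rwhisk, Pt_inv.
  - apply inv2_cell_cast, inv2_lwhisk, Pt_inv.
  - eapply Heq_trans; [eapply Heq_rwhisk; [apply cell_cast_Heq | reflexivity]|].
    eapply Heq_trans; [apply HB|]. apply Heq_sym.
    eapply Heq_trans; [eapply Heq_rwhisk; [apply cell_cast_Heq | reflexivity]|]. exact HA.
Qed.

Definition lift_nat : TwoNat F' G :=
  Build_TwoNat C D F' G d lift_nat1
    (nat2_of_two_epi eps a d (fun A => Hepi _ _ _ (HE A)) d_eps lift_nat1).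

Definition lift_modif : Modif a' (compnat C D lift_nat mu) :=
  Build_Modif C D F' G' a' (compnat C D lift_nat mu) Pt
    (mnat_of_rwhisk_two_epi eps a' (compnat C D lift_nat mu) Psi Pt
       (fun A => Hepi _ _ _ (HE A)) Pt_eps).
End LiftPointwise.


Lemma efs_lift_pointwise {C : PreTwoCat} {D : TwoCat} {E M : Class D} :
  efs_lift E M -> (forall (A B : ob D) (e : hom A B), E A B e -> two_epi e) ->
  efs_lift (P := FunCat C D) (pointwise E) (pointwise M).
Proof.
  intros Hl Hepi F F' G G' eps mu a a' Psi HE HM HPsi.
  destruct (dependent_choice _ (fun A => Hl _ _ _ _ _ _ _ _ (mcomp Psi A) (HE A) (HM A)
    (inv2_mcomp Psi HPsi A))) as [d Hd].
  destruct (dependent_choice _ Hd) as [Pt HP].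
  assert (d_eps : forall A, comp1 (d A) (ncomp eps A) = ncomp a A) by apply HP.
  assert (Pt_inv : forall A, inv2 (Pt A)) by apply HP.
  assert (Pt_eps : forall A, Heq (rwhisk (Pt A) (ncomp eps A)) (mcomp Psi A)) by apply HP.
  exists (lift_nat Hl Hepi eps mu a a' Psi HE HM d Pt d_eps Pt_inv Pt_eps),
    (lift_modif Hl Hepi eps mu a a' Psi HE HM d Pt d_eps Pt_inv Pt_eps).
  split; [split; [|split]|split].
  - apply TwoNat_ext, d_eps.
  - apply inv2_Modif, Pt_inv.
  - apply Heq_Modif; simpl; [reflexivity | | exact Pt_eps].
    intro A. rewrite <- comp1_assoc, d_eps. reflexivity.
  - intros d2 Psi2 Hd2 HPsi2 HPsi2eps.
    assert (Huniq : forall A, ncomp d2 A = d A /\ Heq (mcomp Psi2 A) (Pt A)).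
    { intro A. apply HP.
      - exact (ncomp_eq _ _ Hd2 A).
      - exact (inv2_mcomp Psi2 HPsi2 A).
      - exact (Heq_mcomp _ _ HPsi2eps A). }
    split.
    + apply TwoNat_ext, Huniq.
    + apply Heq_Modif; simpl; [reflexivity | | apply Huniq].
      intro A. rewrite (proj1 (Huniq A)). reflexivity.
  - intro Hid.
    assert (Hstrict : forall A,
      comp1 (ncomp mu A) (d A) = ncomp a' A /\ Heq (Pt A) (id2 (ncomp a' A)))
      by (intro A; apply HP, (Heq_mcomp _ _ Hid A)).
    split.
    + apply TwoNat_ext, Hstrict.
    + apply Heq_Modif; simpl; [reflexivity | apply Hstrict | apply Hstrict].
Qed.

Section FactorPointwise.
Context {C : PreTwoCat} {D : TwoCat} {E M : Class D}
  (Hl : efs_lift E M) (H2 : efs_2lift E M) (Hsep : separates_parallel_pairs E M)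
  (Hepi : forall (A B : ob D) (e : hom A B), E A B e -> two_epi e).
Context {F G : TwoFunctor C D} (al : TwoNat F G) (X : ob C -> ob D)
  (e : forall A, hom (fob F A) (X A)) (m : forall A, hom (X A) (fob G A))
  (HE : forall A, E _ _ (e A)) (HM : forall A, M _ _ (m A))
  (Hal : forall A, ncomp al A = comp1 (m A) (e A)).

Lemma factor_square (A B : ob C) (f : hom A B) :
  comp1 (comp1 (fhom G f) (m A)) (e A) = comp1 (m B) (comp1 (e B) (fhom F f)).
Proof. rewrite <- comp1_assoc, <- Hal, (nat1 al f), Hal, <- comp1_assoc. reflexivity. Qed.

Definition mid_hom (A B : ob C) (f : hom A B) : hom (X A) (X B) :=
  proj1_sig (constructive_indefinite_description _
    (efs_lift_strict Hl (e A) (m B) _ _ (HE A) (HM B) (factor_square A B f))).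

Lemma mid_hom_spec (A B : ob C) (f : hom A B) :
  comp1 (mid_hom A B f) (e A) = comp1 (e B) (fhom F f) /\
  comp1 (m B) (mid_hom A B f) = comp1 (fhom G f) (m A).
Proof. unfold mid_hom. apply proj2_sig. Qed.

Lemma mid_hom_unique (A B : ob C) (f : hom A B) (d : hom (X A) (X B)) :
  comp1 d (e A) = comp1 (e B) (fhom F f) -> comp1 (m B) d = comp1 (fhom G f) (m A) ->
  d = mid_hom A B f.
Proof.
  intros H1 H3. destruct (mid_hom_spec A B f) as [K1 K2]. apply Hsep.
  - exists (fob F A), (e A). rewrite H1, K1. auto.
  - exists (fob G B), (m B). rewrite H3, K2. auto.
Qed.

Lemma mid_cell_exists (A B : ob C) (f f' : hom A B) (x : cell f f') :
  exists Dl : cell (mid_hom A B f) (mid_hom A B f'),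
    Heq (rwhisk Dl (e A)) (lwhisk (e B) (fcell F x)) /\
    Heq (lwhisk (m B) Dl) (rwhisk (fcell G x) (m A)).
Proof.
  destruct (mid_hom_spec A B f) as [K1 K2], (mid_hom_spec A B f') as [K3 K4].
  destruct (H2 _ _ _ _ (e A) (m B) _ _ _ _ (HE A) (HM B) (factor_square A B f)
    (factor_square A B f') (lwhisk (e B) (fcell F x)) (rwhisk (fcell G x) (m A)))
    with (d1 := mid_hom A B f) (d2 := mid_hom A B f') as [Dl [[J1 J2] _]]; auto.
  { eapply Heq_trans; [apply lwhisk_lwhisk|].
    eapply Heq_trans; [eapply Heq_lwhisk; [apply Heq_refl | symmetry; apply Hal]|].
    eapply Heq_trans; [apply Heq_sym, (nat2 al x)|].
    eapply Heq_trans; [eapply Heq_rwhisk; [apply Heq_refl | apply Hal]|].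
    apply Heq_sym, rwhisk_rwhisk. }
  exists Dl. auto.
Qed.

Definition mid_cell (A B : ob C) (f f' : hom A B) (x : cell f f') :
  cell (mid_hom A B f) (mid_hom A B f') :=
  proj1_sig (constructive_indefinite_description _ (mid_cell_exists A B f f' x)).

Lemma mid_cell_spec (A B : ob C) (f f' : hom A B) (x : cell f f') :
  Heq (rwhisk (mid_cell A B f f' x) (e A)) (lwhisk (e B) (fcell F x)) /\
  Heq (lwhisk (m B) (mid_cell A B f f' x)) (rwhisk (fcell G x) (m A)).
Proof. unfold mid_cell. apply proj2_sig. Qed.

Lemma mid_cell_unique (A B : ob C) (f f' : hom A B) (x : cell f f')
  (Dl : cell (mid_hom A B f) (mid_hom A B f')) :
  Heq (rwhisk Dl (e A)) (lwhisk (e B) (fcell F x)) -> Dl = mid_cell A B f f' x.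
Proof.
  intro H. apply (Hepi _ _ _ (HE A)), Heq_eq.
  eapply Heq_trans; [exact H|]. apply Heq_sym, mid_cell_spec.
Qed.

Lemma mid_id1 (A : ob C) : mid_hom A A (id1 A) = id1 (X A).
Proof.
  symmetry. apply mid_hom_unique.
  - rewrite (f_id1 _ _ F), comp1_id_l, comp1_id_r. reflexivity.
  - rewrite (f_id1 _ _ G), comp1_id_l, comp1_id_r. reflexivity.
Qed.

Lemma mid_comp1 (A B Y : ob C) (f : hom A B) (g : hom B Y) :
  mid_hom A Y (comp1 g f) = comp1 (mid_hom B Y g) (mid_hom A B f).
Proof.
  symmetry. apply mid_hom_unique.
  - rewrite <- comp1_assoc, (proj1 (mid_hom_spec A B f)), comp1_assoc,
      (proj1 (mid_hom_spec B Y g)), <- comp1_assoc, <- (f_comp1 _ _ F). reflexivity.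
  - rewrite comp1_assoc, (proj2 (mid_hom_spec B Y g)), <- comp1_assoc,
      (proj2 (mid_hom_spec A B f)), comp1_assoc, <- (f_comp1 _ _ G). reflexivity.
Qed.

Lemma mid_id2 (A B : ob C) (f : hom A B) : mid_cell A B f f (id2 f) = id2 (mid_hom A B f).
Proof.
  symmetry. apply mid_cell_unique. rewrite rwhisk_id2, (f_id2 _ _ F), lwhisk_id2.
  apply Heq_id2, mid_hom_spec.
Qed.

Lemma mid_vcomp (A B : ob C) (f g h : hom A B) (x : cell g h) (y : cell f g) :
  mid_cell A B f h (vcomp x y) = vcomp (mid_cell A B g h x) (mid_cell A B f g y).
Proof.
  symmetry. apply mid_cell_unique. rewrite rwhisk_vcomp, (f_vcomp _ _ F), lwhisk_vcomp.
  apply Heq_vcomp; apply mid_cell_spec.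
Qed.

Lemma mid_hcomp (A B Y : ob C) (f f' : hom A B) (g g' : hom B Y)
  (y : cell g g') (x : cell f f') :
  Heq (mid_cell A Y _ _ (hcomp y x)) (hcomp (mid_cell B Y g g' y) (mid_cell A B f f' x)).
Proof.
  pose proof (tc_ax D) as AX.
  apply (two_epi_Heq _ (Hepi _ _ _ (HE A))); try apply mid_comp1.
  eapply Heq_trans; [apply mid_cell_spec|].
  eapply Heq_trans; [eapply Heq_lwhisk; [apply (f_hcomp _ _ F) | reflexivity]|].
  unfold lwhisk at 1.
  eapply Heq_trans; [apply (ax_hcomp_assoc _ AX)|].
  eapply Heq_trans;
    [eapply Heq_hcomp; [apply Heq_sym, (proj1 (mid_cell_spec B Y g g' y)) | apply Heq_refl]|].
  unfold rwhisk at 1.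
  eapply Heq_trans; [apply Heq_sym, (ax_hcomp_assoc _ AX)|].
  eapply Heq_trans;
    [eapply Heq_hcomp; [apply Heq_refl | apply Heq_sym, (proj1 (mid_cell_spec A B f f' x))]|].
  apply (ax_hcomp_assoc _ AX).
Qed.

Definition mid_functor : TwoFunctor C D :=
  Build_TwoFunctor C D X mid_hom mid_cell mid_id1 mid_comp1 mid_id2 mid_vcomp mid_hcomp.

Definition mid_left : TwoNat F mid_functor :=
  Build_TwoNat C D F mid_functor e
    (fun A B f => proj1 (mid_hom_spec A B f))
    (fun A B f f' x => proj1 (mid_cell_spec A B f f' x)).

Definition mid_right : TwoNat mid_functor G :=
  Build_TwoNat C D mid_functor G m
    (fun A B f => eq_sym (proj2 (mid_hom_spec A B f)))
    (fun A B f f' x => Heq_sym _ _ (proj2 (mid_cell_spec A B f f' x))).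

Lemma mid_factorization : al = compnat C D mid_left mid_right.
Proof. apply TwoNat_ext, Hal. Qed.
End FactorPointwise.

Lemma efs_factor_pointwise {C : PreTwoCat} {D : TwoCat} {E M : Class D} :
  efs_factor E M -> efs_lift E M -> efs_2lift E M -> separates_parallel_pairs E M ->
  (forall (A B : ob D) (e : hom A B), E A B e -> two_epi e) ->
  efs_factor (P := FunCat C D) (pointwise E) (pointwise M).
Proof.
  intros Hf Hl H2 Hsep Hepi F G al.
  destruct (dependent_choice _ (fun A => Hf _ _ (ncomp al A))) as [X HX].
  destruct (dependent_choice _ HX) as [e He].
  destruct (dependent_choice _ He) as [m Hm].
  assert (HE : forall A, E _ _ (e A)) by apply Hm.
  assert (HM : forall A, M _ _ (m A)) by apply Hm.
  assert (Hal : forall A, ncomp al A = comp1 (m A) (e A)) by apply Hm.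
  exists (mid_functor Hl H2 Hsep Hepi al X e m HE HM Hal),
    (mid_left Hl H2 Hsep Hepi al X e m HE HM Hal),
    (mid_right Hl H2 Hsep Hepi al X e m HE HM Hal).
  split; [exact HE | split; [exact HM | apply mid_factorization]].
Qed.

Theorem theorem2p9 (C D : TwoCat) (E M : Class D) :
  enhanced_fact_system E M ->
  separates_parallel_pairs E M ->
  (forall (A B : ob D) (e : hom A B), E A B e -> two_epi e) ->
  (forall (A B : ob D) (m : hom A B), M A B m -> two_mono m) ->
  (forall (A B : ob D) (m : hom A B), M A B m -> postcomp_creates_inv2 m) ->
  rigid_efs (P := FunCat C D) (pointwise E) (pointwise M).
Proof.
  intros [HisoE [HisoM [Hf [Hl H2]]]] Hsep Hepi Hmono Hcr.
  repeat split.
  - apply contains_isos_pointwise, HisoE.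
  - apply contains_isos_pointwise, HisoM.
  - apply efs_factor_pointwise; assumption.
  - apply efs_lift_pointwise; assumption.
  - apply efs_2lift_pointwise; assumption.
  - apply rigid_cond_pointwise; assumption.
Qed.
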